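(* Let $\Sigma=(\mathcal{U},\mathcal{S})$ be a set system whose sets cover $\mathcal{U}$. The set-cover solution $\mathcal{C}$ (with its assignment and levels) returned by the procedure Greedy described below is stable. Greedy: initialize $I\gets\mathcal{U}$ and all levels $\mathcal{L}_j\gets\varnothing$; while $I\neq\varnothing$, pick $S^{*}\in\arg\max_{S\in\mathcal{S}}|I\cap S|$ (ties broken arbitrarily), set $\mathtt{cov}(S^{*})\gets I\cap S^{*}$ (i.e., assign every element of $I\cap S^*$ to $S^*$), add $S^{*}$ to the level $\mathcal{L}_j$ with $2^{j}\leq|\mathtt{cov}(S^{*})|<2^{j+1}$, and set $I\gets I\setminus\mathtt{cov}(S^{*})$; return $\mathcal{C}=\bigcup_{j\geq0}\mathcal{L}_j$.
   Context: A set system $\Sigma=(\mathcal{U},\mathcal{S})$ consists of a finite universe $\mathcal{U}$ and a finite collection $\mathcal{S}$ of subsets of $\mathcal{U}$; a set-cover solution is a subcollection $\mathcal{C}\subseteq\mathcal{S}$ with $\bigcup_{S\in\mathcal{C}}S=\mathcal{U}$. For a set-cover solution $\mathcal{C}$, an assignment is a map $\phi:\mathcal{U}\to\mathcal{C}$ with $u\in\phi(u)$ for every $u$. For $S\in\mathcal{C}$, its cover set is $\mathtt{cov}(S)=\{u\in\mathcal{U}:\phi(u)=S\}$. The sets of $\mathcal{C}$ are organized into levels $\mathcal{L}_j$, $j\in\{0,1,2,\dots\}$, each set of $\mathcal{C}$ lying in exactly one level, and $A_j=\{u\in\mathcal{U}:\phi(u)\in\mathcal{L}_j\}$. The solution is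 stable if (1) for each $j$ and each $S\in\mathcal{L}_j$, $2^{j}\leq|\mathtt{cov}(S)|<2^{j+1}$; and (2) for each level $\mathcal{L}_j$, there is no $S\in\mathcal{S}$ with $|S\cap A_j|\geq 2^{j+1}$. *)

From mathcomp Require Import all_boot.
Set Implicit Arguments. Unset Strict Implicit. Unset Printing Implicit Defensive.

Section Defs.
Variable U : finType.   (* the finite universe is the whole type U *)

Definition set_cover (S C : {set {set U}}) : Prop :=
  C \subset S /\ \bigcup_(X in C) X = [set: U].

Definition assignment (C : {set {set U}}) (phi : U -> {set U}) : Prop :=
  forall u, phi u \in C /\ u \in phi u.

Definition cov (phi : U -> {set U}) (X : {set U}) : {set U} :=
  [set u | phi u == X].

(* levels are given by a function lvl : each set of C lies in exactly
   one level L_j = { X in C | lvl X = j };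
   A_j = { u | phi u \in L_j } *)
Definition Alevel (phi : U -> {set U}) (lvl : {set U} -> nat) (j : nat) : {set U} :=
  [set u | lvl (phi u) == j].

Definition stable (S C : {set {set U}}) (phi : U -> {set U})
    (lvl : {set U} -> nat) : Prop :=
  [/\ set_cover S C, assignment C phi,
      (forall X, X \in C -> 2 ^ lvl X <= #|cov phi X| < 2 ^ (lvl X).+1)
    & (forall j X, X \in S -> #|X :&: Alevel phi lvl j| < 2 ^ j.+1)].

(* A run of Greedy is recorded by the sequence s of picked sets S*_0, S*_1, ...
   residual s = U minus the elements covered by the sets in s (the set I). *)
Definition residual (s : seq {set U}) : {set U} :=
  [set: U] :\: \bigcup_(X <- s) X.

(* cov(S*_t) := I_t \cap S*_t, where I_t is the residual before step t *)
Definition step_cov (s : seq {set U}) (t : nat) : {set U} :=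
  residual (take t s) :&: nth set0 s t.

(* s is a complete run of Greedy on (U, S), with arbitrary tie-breaking:
   at each step I is nonempty and the pick maximizes |I \cap S| over S;
   the loop stops when I is empty. *)
Definition greedy_run (S : {set {set U}}) (s : seq {set U}) : Prop :=
  (forall t, t < size s ->
     [/\ residual (take t s) != set0,
         nth set0 s t \in S
       & forall X, X \in S ->
           #|residual (take t s) :&: X| <= #|step_cov s t| ])
  /\ residual s = set0.

Definition greedy_C (s : seq {set U}) : {set {set U}} := [set X in s].

(* each u is assigned to the pick S*_t with u \in cov(S*_t), i.e. the first pick
   containing u *)
Definition greedy_phi (s : seq {set U}) (u : U) : {set U} :=
  nth set0 s (find (fun X : {set U} => u \in X) s).

(* S*_t is put in level j with 2^j <= |cov(S*_t)| < 2^(j+1), i.e. j = floor(log2 |cov|) *)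
Definition greedy_lvl (s : seq {set U}) (X : {set U}) : nat :=
  trunc_log 2 #|step_cov s (index X s)|.

End Defs.

From mathcomp Require Import all_boot.

(* Every element u is covered at the first step [first_pick u] whose pick
   contains u, so cov(S*_t) is exactly the set covered at step t, and the
   elements covered at step t or later form the residual I_t.  For stability
   at level j, let t be the first step put on level j: every element of A_j
   is covered at step t or later, so A_j lies in I_t, and for any X in S the
   greedy choice gives |X :&: A_j| <= |X :&: I_t| <= |cov(S*_t)| < 2^(j+1). *)

Set Implicit Arguments.
Unset Strict Implicit.
Unset Printing Implicit Defensive.

Lemma mem_bigcup_seq (T : finType) (u : T) (r : seq {set T}) :
  (u \in \bigcup_(X <- r) X) = has (fun X : {set T} => u \in X) r.
Proof. by rewrite bigcup_seq; apply/bigcupP/hasP => -[X]; exists X. Qed.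

Section TerminatedRun.

Variables (U : finType) (s : seq {set U}).
Hypothesis residual_s : residual s = set0.

Definition first_pick (u : U) : nat := find (fun X : {set U} => u \in X) s.

Definition step_lvl (t : nat) : nat := trunc_log 2 #|step_cov s t|.

Lemma has_pick u : has (fun X : {set U} => u \in X) s.
Proof.
apply/negPn/negP => not_covered.
have : u \in residual s by rewrite !inE mem_bigcup_seq (negbTE not_covered).
by rewrite residual_s inE.
Qed.

Lemma first_pick_lt u : first_pick u < size s.
Proof. by rewrite -has_find has_pick. Qed.

Lemma mem_first_pick u : u \in nth set0 s (first_pick u).
Proof. exact: nth_find (has_pick u). Qed.

Lemma mem_residual_take u t : (u \in residual (take t s)) = (t <= first_pick u).
Proof.
by rewrite !inE mem_bigcup_seq (has_take _ (has_pick u)) -leqNgt andbT.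
Qed.

Lemma mem_step_cov u t : (u \in step_cov s t) = (first_pick u == t).
Proof.
rewrite inE mem_residual_take eq_sym eqn_leq.
case: leqP => //= le_t_first; apply/idP/idP => [u_in | le_first_t].
  by rewrite leqNgt; apply/negP => /(before_find set0); rewrite u_in.
have -> : t = first_pick u by apply/eqP; rewrite eqn_leq le_t_first.
exact: mem_first_pick.
Qed.

Lemma greedy_phi_in u : greedy_phi s u \in s.
Proof. exact/mem_nth/first_pick_lt. Qed.

Lemma greedy_assignment : assignment (greedy_C s) (greedy_phi s).
Proof. by move=> u; rewrite inE greedy_phi_in // mem_first_pick. Qed.

Lemma index_greedy_phi u : index (greedy_phi s u) s = first_pick u.
Proof.
apply/eqP; rewrite eqn_leq index_nth ?first_pick_lt //= leqNgt.
apply/negP => /(before_find set0).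
by rewrite nth_index ?greedy_phi_in // mem_first_pick.
Qed.

Lemma greedy_lvl_phi u : greedy_lvl s (greedy_phi s u) = step_lvl (first_pick u).
Proof. by rewrite /greedy_lvl index_greedy_phi. Qed.

Lemma cov_greedy_phi X :
  X \in s -> cov (greedy_phi s) X = step_cov s (index X s).
Proof.
move=> Xs; apply/setP => u; rewrite inE mem_step_cov -index_greedy_phi.
apply/eqP/eqP => [-> // | eq_index].
by rewrite -(nth_index set0 Xs) -eq_index nth_index ?greedy_phi_in.
Qed.

Lemma Alevel_sub_residual j t :
  (forall t', t' < t -> step_lvl t' != j) ->
  Alevel (greedy_phi s) (greedy_lvl s) j \subset residual (take t s).
Proof.
move=> before_t; apply/subsetP => u; rewrite inE greedy_lvl_phi.
by rewrite mem_residual_take leqNgt; apply: contraL; apply: before_t.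
Qed.

End TerminatedRun.

Section GreedyRun.

Variables (U : finType) (S : {set {set U}}) (s : seq {set U}).
Hypothesis S_cover : \bigcup_(X in S) X = [set: U].
Hypothesis s_run : greedy_run S s.

Let residual_s : residual s = set0 := s_run.2.

Lemma step_cov_gt0 t : t < size s -> 0 < #|step_cov s t|.
Proof.
move=> lt_t; have [/set0Pn[u u_res] _ greedy_t] := s_run.1 t lt_t.
have : u \in \bigcup_(X in S) X by rewrite S_cover inE.
case/bigcupP => X XS uX; apply: leq_trans (greedy_t X XS).
by rewrite card_gt0; apply/set0Pn; exists u; rewrite inE u_res.
Qed.

Lemma greedy_set_cover : set_cover S (greedy_C s).
Proof.
split.
  apply/subsetP => X; rewrite inE => /(nthP set0)[t lt_t <-].
  by have [] := s_run.1 t lt_t.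
apply/setP => u; rewrite inE; apply/bigcupP; exists (greedy_phi s u).
  by rewrite inE greedy_phi_in.
exact: mem_first_pick.
Qed.

Lemma greedy_cov_bounds X : X \in greedy_C s ->
  2 ^ greedy_lvl s X <= #|cov (greedy_phi s) X| < 2 ^ (greedy_lvl s X).+1.
Proof.
rewrite inE => Xs; rewrite cov_greedy_phi // /greedy_lvl.
by apply: trunc_log_bounds => //; rewrite step_cov_gt0 ?index_mem.
Qed.

Lemma greedy_level_sparse j X : X \in S ->
  #|X :&: Alevel (greedy_phi s) (greedy_lvl s) j| < 2 ^ j.+1.
Proof.
move=> XS; set A := Alevel _ _ j.
have [-> | /set0Pn[u]] := eqVneq (X :&: A) set0; first by rewrite cards0 expn_gt0.
rewrite !inE greedy_lvl_phi // => /andP[_ /eqP lvl_u].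
have on_level : exists t, (t < size s) && (step_lvl s t == j).
  by exists (first_pick s u); rewrite first_pick_lt // lvl_u eqxx.
case: (ex_minnP on_level) => t /andP[lt_t /eqP lvl_t] first_t.
have [_ _ greedy_t] := s_run.1 t lt_t.
have A_res : A \subset residual (take t s).
  apply: Alevel_sub_residual => // t' lt_t'; apply/eqP => lvl_t'.
  suff : t <= t' by rewrite leqNgt lt_t'.
  by rewrite first_t // lvl_t' -lvl_t eqxx andbT (ltn_trans lt_t').
rewrite (leq_ltn_trans (subset_leq_card (setIS X A_res))) //.
by rewrite setIC (leq_ltn_trans (greedy_t X XS)) // -lvl_t trunc_log_ltn.
Qed.

End GreedyRun.

Theorem lemma1 (U : finType) (S : {set {set U}})
    (hcover : \bigcup_(X in S) X = [set: U])
    (s : seq {set U}) (hrun : greedy_run S s) :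
  stable S (greedy_C s) (greedy_phi s) (greedy_lvl s).
Proof.
split.
- exact: greedy_set_cover hrun.
- exact: greedy_assignment hrun.2.
- exact: greedy_cov_bounds hcover hrun.
- exact: greedy_level_sparse hrun.
Qed.
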